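(* Let $G=(V,E)$ be a finite simple undirected graph of bounded growth with maximum degree $\Delta$ and neighborhood independence bounded by a constant $c$, and let $R$ be an integer with $1\le R<\Delta$. Run the procedure Extended-VM on $G$ with parameter $R$. Then in every phase, each vertex of $V$ is selected by at most $O(\Delta c/R)$ vertices.
   Context: The neighborhood independence of $G$ is the maximum over $v$ of the size of an independent set contained in the neighbor set $\Gamma(v)$. $G$ has bounded growth if for every $r$ the number of pairwise independent vertices within distance $r$ of any vertex is bounded by a function of $r$ alone. Procedure Extended-VM$(G,R)$: compute a proper $(\Delta+1)$-coloring of $G$; partition the colors into $R$ super-classes, each consisting of $O(\Delta/R)$ colors (each vertex belongs to the super-class of its color); then perform $R$ phases in round-robin order, one per super-class $S$; in the phase of $S$, the vertices of $S$ are active, and each active vertex $v$ selects all its neighbors not in $S$, divides its backup data equally among them, and sends the parts to them. *)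

From mathcomp Require Import all_boot.
Set Implicit Arguments. Unset Strict Implicit. Unset Printing Implicit Defensive.

Definition simple_graph (T : finType) (e : rel T) : Prop :=
  symmetric e /\ irreflexive e.

Definition nbhd (T : finType) (e : rel T) (v : T) : {set T} := [set u | e v u].

Definition maxdeg (T : finType) (e : rel T) : nat := \max_(v : T) #|nbhd e v|.

Definition independent (T : finType) (e : rel T) (I : {set T}) : bool :=
  [forall x in I, forall y in I, ~~ e x y].

Definition nbhd_indep (T : finType) (e : rel T) : nat :=
  \max_(v : T) \max_(I : {set T} | (I \subset nbhd e v) && independent e I) #|I|.

Fixpoint ball (T : finType) (e : rel T) (r : nat) (v : T) : {set T} :=
  match r with
  | 0 => [set v]
  | r'.+1 => ball e r' v :|: [set w | [exists u in ball e r' v, e u w]]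
  end.

Definition growth_bounded_by (T : finType) (e : rel T) (f : nat -> nat) : Prop :=
  forall (r : nat) (v : T) (I : {set T}),
    I \subset ball e r v -> independent e I -> #|I| <= f r.

Definition proper_coloring (T : finType) (e : rel T) (k : nat)
  (col : T -> 'I_k) : Prop :=
  forall u v, e u v -> col u != col v.

(* Extended-VM, phase of super-class s: the vertices of S (color in super-class s)
   are active; each active vertex u selects all its neighbors not in S.
   selectors e col sc s v = set of vertices that select v in the phase of s. *)
Definition in_superclass (T : finType) (k R : nat) (col : T -> 'I_k)
  (sc : 'I_k -> 'I_R) (s : 'I_R) (u : T) : bool := sc (col u) == s.

Definition selectors (T : finType) (e : rel T) (k R : nat) (col : T -> 'I_k)
  (sc : 'I_k -> 'I_R) (s : 'I_R) (v : T) : {set T} :=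
  [set u | [&& in_superclass col sc s u, e u v & ~~ in_superclass col sc s v]].

From mathcomp Require Import all_boot.

Set Implicit Arguments.
Unset Strict Implicit.
Unset Printing Implicit Defensive.

(* A colour class of a proper colouring is
   independent, so inside Gamma(v) it has at most c vertices; summing over the
   O(Delta/R) colours of S bounds the selectors of v by O(Delta c / R). *)

Lemma card_le_nbhd_indep (T : finType) (e : rel T) (v : T) (I : {set T}) :
  I \subset nbhd e v -> independent e I -> #|I| <= nbhd_indep e.
Proof.
move=> sub_I indep_I; apply: leq_trans (leq_bigmax v).
by apply: (leq_bigmax_cond (F := fun I : {set T} => #|I|)); rewrite sub_I indep_I.
Qed.

Lemma card_le_fibres (T I : finType) (f : T -> I) (A : {set T}) (S : {set I})
    (m : nat) :
  {in A, forall x, f x \in S} ->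
  (forall i, #|[set x in A | f x == i]| <= m) ->
  #|A| <= #|S| * m.
Proof.
move=> f_AS fibre_le; rewrite -sum1_card (partition_big f (fun i => i \in S)) //.
rewrite -sum_nat_const; apply: leq_sum => i _.
rewrite sum1_card; apply: leq_trans (fibre_le i).
by apply/eq_leq/eq_card => x; rewrite !inE.
Qed.

Section Selectors.

Variables (T : finType) (e : rel T) (k R : nat).
Variables (col : T -> 'I_k) (sc : 'I_k -> 'I_R).

Lemma independent_colour_class (A : {set T}) (i : 'I_k) :
  proper_coloring e col -> independent e [set u in A | col u == i].
Proof.
move=> col_proper; apply/forallP => x; apply/implyP => x_i.
apply/forallP => y; apply/implyP => y_i; apply/negP => e_xy.
move: x_i y_i; rewrite !inE => /andP[_ /eqP col_x] /andP[_ /eqP col_y].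
by move: (col_proper _ _ e_xy); rewrite col_x col_y eqxx.
Qed.

Lemma selectors_sub_nbhd (s : 'I_R) (v : T) :
  symmetric e -> selectors e col sc s v \subset nbhd e v.
Proof.
move=> e_sym; apply/subsetP => u; rewrite /selectors !inE => /and3P[_ e_uv _].
by rewrite e_sym.
Qed.

Lemma card_selectors_le (s : 'I_R) (v : T) :
  symmetric e -> proper_coloring e col ->
  #|selectors e col sc s v| <= #|[set i | sc i == s]| * nbhd_indep e.
Proof.
move=> e_sym col_proper; apply: (@card_le_fibres _ _ col) => [u|i].
  by rewrite /selectors !inE => /and3P[].
apply: (@card_le_nbhd_indep _ _ v); last exact: independent_colour_class.
apply: subset_trans (selectors_sub_nbhd s v e_sym).
by apply/subsetP => u; rewrite inE => /andP[].
Qed.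

End Selectors.

Theorem lemma3 :
  forall K : nat, exists C : nat,
  forall (T : finType) (e : rel T) (f : nat -> nat) (c R : nat)
    (col : T -> 'I_(maxdeg e).+1) (sc : 'I_(maxdeg e).+1 -> 'I_R),
    simple_graph e ->
    growth_bounded_by e f ->
    nbhd_indep e <= c ->
    1 <= R -> R < maxdeg e ->
    proper_coloring e col ->
    (forall s : 'I_R, #|[set k | sc k == s]| * R <= K * maxdeg e) ->
    forall (s : 'I_R) (v : T),
      #|selectors e col sc s v| * R <= C * maxdeg e * c.
Proof.
move=> K; exists K => T e f c R col sc [e_sym _] _ indep_le_c _ _ col_proper
  superclass_le s v.
have sel_le : #|selectors e col sc s v| <= #|[set k | sc k == s]| * c.
  apply: leq_trans (card_selectors_le sc s v e_sym col_proper) _.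
  by rewrite leq_mul2l indep_le_c orbT.
apply: leq_trans (leq_mul sel_le (leqnn R)) _.
by rewrite mulnAC leq_mul2r superclass_le orbT.
Qed.
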